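(* Under the standing setting and Assumptions (A1), (A2), (A3) described in the context, for every $T>0$, $$\lim_{\epsilon\to 0}\ \sup_{0\le t\le T}|X(t)-\bar X^{\rm c}(t)|=0\quad\text{almost surely.}$$
   Context: Setting. Let $(\Omega,\mathcal F,P)$ be a complete probability space, $\epsilon_0>0$ fixed and $\epsilon\in(0,\epsilon_0)$ a small parameter. Consider the discrete-time system $$X_{k+1}=X_k+\epsilon f(X_k,Y_{k+1}),\quad k=0,1,2,\dots,\qquad X_0=x\in\mathbb R^n \text{ (deterministic)},$$ where $\{Y_k\}$ is an $\mathbb R^m$-valued stochastic sequence with state space $S_Y\subset\mathbb R^m$, and $f:\mathbb R^n\times\mathbb R^m\to\mathbb R^n$. (A1) $f(x,y)$ is continuous in $(x,y)$; for each $x$, $y\mapsto f(x,y)$ is bounded; and $f$ is locally Lipschitz in $x$ uniformly in $y$: for every compact $D\subset\mathbb R^n$ there is $k_D$ with $|f(x_1,y)-f(x_2,y)|\le k_D|x_1-x_2|$ for all $x_1,x_2\in D$, $y\in S_Y$. (A2) $\{Y_k\}$ is ergodic with invariant distribution $\mu$, in the sense that for each $x$, $\bar f(x):=\int_{S_Y}f(x,y)\mu(dy)=\lim_{N\to\infty}\frac1{N+1}\sum_{k=0}^N f(x,Y_{k+1})$ almost surely. Average systems: the discrete average system $\bar X^{\rm d}_{k+1}=\bar X^{\rm d}_k+\epsilon\bar f(\bar X^{\rm d}_k)$, and the continuous average system $\frac{d}{dt}\bar X^{\rm c}(t)=\bar f(\bar X^{\rm c}(t))$, both with initial value $\bar X^{\rm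 d}_0=\bar X^{\rm c}(0)=X_0=x$. (A3) The continuous average system has a solution on $[0,\infty)$. Continuous-time versions: with $t_k=\epsilon k$, define the piecewise constant processes $X(t)=X_k$ and $\bar X^{\rm d}(t)=\bar X^{\rm d}_k$ for $t_k\le t<t_{k+1}$ (these depend on $\epsilon$). *)

From Stdlib Require Import Reals.
From mathcomp Require Import all_boot.
Set Implicit Arguments.
Open Scope R_scope.

Definition Vec (n : nat) := 'I_n -> R.
Definition vzero {n : nat} : Vec n := fun _ => 0.
Definition vadd {n : nat} (u v : Vec n) : Vec n := fun i => u i + v i.
Definition vsub {n : nat} (u v : Vec n) : Vec n := fun i => u i - v i.
Definition vscale {n : nat} (c : R) (v : Vec n) : Vec n := fun i => c * v i.
Definition sqnorm {n : nat} (v : Vec n) : R :=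
  foldr (fun i acc => v i * v i + acc) 0 (enum 'I_n).
Definition vnorm {n : nat} (v : Vec n) : R := sqrt (sqnorm v).

Fixpoint vsum {n : nat} (g : nat -> Vec n) (N : nat) : Vec n :=
  match N with
  | O => vzero
  | S N' => vadd (vsum g N') (g N')
  end.

Definition vconv {n : nat} (u : nat -> Vec n) (l : Vec n) : Prop :=
  forall e, 0 < e -> exists N0 : nat, forall N : nat, (N0 <= N)%nat ->
    vnorm (vsub (u N) l) < e.

Definition ergavg {n m : nat} (f : Vec n -> Vec m -> Vec n) (Y : nat -> Vec m)
  (x : Vec n) (N : nat) : Vec n :=
  vscale (/ INR (N + 1)) (vsum (fun k => f x (Y (k + 1)%nat)) (N + 1)).

Fixpoint Xseq {n m : nat} (f : Vec n -> Vec m -> Vec n) (Y : nat -> Vec m)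
  (eps : R) (x : Vec n) (k : nat) : Vec n :=
  match k with
  | O => x
  | S k' => let p := Xseq f Y eps x k' in vadd p (vscale eps (f p (Y (S k'))))
  end.

(* Piecewise constant interpolation X(t) = X_k for eps k <= t < eps (k+1);
   Int_part is the floor function. *)
Definition Xcont {n m : nat} (f : Vec n -> Vec m -> Vec n) (Y : nat -> Vec m)
  (eps : R) (x : Vec n) (t : R) : Vec n :=
  Xseq f Y eps x (Z.to_nat (Int_part (t / eps))).

(* Null sets of a complete probability space, abstracted as a proper
   sigma-ideal: closed under subsets (completeness) and countable unions,
   and the whole space is not null. *)
Definition null_ideal {Omega : Type} (null : (Omega -> Prop) -> Prop) : Prop :=
  (forall A B : Omega -> Prop, null B -> (forall w, A w -> B w) -> null A) /\
  (forall A : nat -> Omega -> Prop, (forall k, null (A k)) ->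
      null (fun w => exists k, A k w)) /\
  ~ null (fun _ => True).

Definition almost_surely {Omega : Type} (null : (Omega -> Prop) -> Prop)
  (Q : Omega -> Prop) : Prop :=
  exists N : Omega -> Prop, null N /\ forall w, ~ N w -> Q w.

From Stdlib Require Import Reals Lra Lia ZArith Classical.
From mathcomp Require Import all_boot.
Open Scope R_scope.

(* Off a null set, the ergodic averages converge simultaneously at the
   countably many grid points Xc (j / (M + 1)).  Along such a path, freeze the
   vector field at the last grid point z_i before time i eps: the error
   X_k - Xc (k eps), minus the accumulated noise eps * sum_(i<k) (f (z_i, Y_(i+1))
   - fbar z_i), satisfies a discrete Gronwall recursion whose forcing is of the
   order of the grid mesh and of eps.  On each of the finitely many grid points
   below T the noise is an ergodic sum with N eps bounded, hence small for small
   eps, and each change of grid point costs at most twice that bound.  All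
   estimates use the l1 norm; fbar inherits the local Lipschitz constant of f
   as a limit of ergodic averages. *)

Section L1Norm.
Context {n : nat}.
Implicit Types u v w : Vec n.

Definition l1norm v : R := foldr (fun i acc => Rabs (v i) + acc) 0 (enum 'I_n).

Lemma l1norm_ge0 v : 0 <= l1norm v.
Proof.
rewrite /l1norm; elim: (enum 'I_n) => [|i l IH] /=; first lra.
have := Rabs_pos (v i); lra.
Qed.

Lemma l1norm_le_lin u v w a b : 0 <= a -> 0 <= b ->
  (forall i, Rabs (u i) <= a * Rabs (v i) + b * Rabs (w i)) ->
  l1norm u <= a * l1norm v + b * l1norm w.
Proof.
move=> ha hb H; rewrite /l1norm; elim: (enum 'I_n) => [|i l IH] /=; first lra.
have := H i; rewrite !Rmult_plus_distr_l; lra.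
Qed.

Lemma l1norm_triangle u v w :
  (forall i, Rabs (u i) <= Rabs (v i) + Rabs (w i)) -> l1norm u <= l1norm v + l1norm w.
Proof.
move=> H; rewrite -(Rmult_1_l (l1norm v)) -(Rmult_1_l (l1norm w)).
by apply: l1norm_le_lin; try lra; move=> i; rewrite !Rmult_1_l.
Qed.

Lemma l1norm_scale u v a : 0 <= a ->
  (forall i, Rabs (u i) <= a * Rabs (v i)) -> l1norm u <= a * l1norm v.
Proof.
move=> ha H; rewrite -(Rplus_0_r (a * _)) -(Rmult_0_l (l1norm v)).
by apply: l1norm_le_lin; try lra; move=> i; rewrite Rmult_0_l Rplus_0_r.
Qed.

Lemma l1norm_le_const u C : (forall i, Rabs (u i) <= C) -> l1norm u <= INR n * C.
Proof.
move=> H; rewrite /l1norm -[X in INR X](size_enum_ord n).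
elim: (enum 'I_n) => [|i l IH] /=; first lra.
change (Rabs (u i) + foldr (fun i acc => Rabs (u i) + acc) 0 l <= INR (size l).+1 * C).
rewrite S_INR; have := H i; lra.
Qed.

Lemma l1norm_eq0 u : (forall i, u i = 0) -> l1norm u = 0.
Proof.
move=> H; rewrite /l1norm; elim: (enum 'I_n) => [|i l IH] //=.
by rewrite IH H Rabs_R0 Rplus_0_r.
Qed.

Lemma coord_le_l1norm v i : Rabs (v i) <= l1norm v.
Proof.
have : i \in enum 'I_n by rewrite mem_enum.
rewrite /l1norm; elim: (enum 'I_n) => [|a l IH] //=.
have ge0 : 0 <= foldr (fun i acc => Rabs (v i) + acc) 0 l.
  elim: l {IH} => [|b l IHl] /=; [lra | have := Rabs_pos (v b); lra].
rewrite in_cons => /orP [/eqP ->|/IH]; first lra.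
have := Rabs_pos (v a); lra.
Qed.

Lemma coord_le_vnorm v i : Rabs (v i) <= vnorm v.
Proof.
have : i \in enum 'I_n by rewrite mem_enum.
rewrite /vnorm /sqnorm -sqrt_Rsqr_abs => hi; apply: sqrt_le_1_alt; rewrite /Rsqr.
elim: (enum 'I_n) hi => [|a l IH] //=.
have ge0 : 0 <= foldr (fun i acc => v i * v i + acc) 0 l.
  elim: l {IH} => [|b l IHl] /=; [lra | have := Rle_0_sqr (v b); rewrite /Rsqr; lra].
rewrite in_cons => /orP [/eqP ->|/IH]; first lra.
have := Rle_0_sqr (v a); rewrite /Rsqr; lra.
Qed.

Lemma vnorm_le_l1norm v : vnorm v <= l1norm v.
Proof.
rewrite /vnorm -(sqrt_square (l1norm v)); last exact: l1norm_ge0.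
apply: sqrt_le_1_alt; rewrite /sqnorm /l1norm.
elim: (enum 'I_n) => [|i l IH] /=; first lra.
have ge0 : 0 <= foldr (fun i acc => Rabs (v i) + acc) 0 l.
  elim: l {IH} => [|b l IHl] /=; [lra | have := Rabs_pos (v b); lra].
have := Rabs_pos (v i).
have -> : v i * v i = Rabs (v i) * Rabs (v i) by rewrite -Rabs_mult Rabs_pos_eq //; nra.
nra.
Qed.

Lemma l1norm_le_vnorm v : l1norm v <= INR n * vnorm v.
Proof. exact/l1norm_le_const/coord_le_vnorm. Qed.

Lemma l1norm_vsub_triangle u v w : l1norm (vsub u w) <= l1norm (vsub u v) + l1norm (vsub v w).
Proof.
apply: l1norm_triangle => i; rewrite /vsub.
have -> : u i - w i = (u i - v i) + (v i - w i) by ring.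
exact: Rabs_triang.
Qed.

Lemma l1norm_vsub_sym u v : l1norm (vsub u v) = l1norm (vsub v u).
Proof.
rewrite /l1norm; elim: (enum 'I_n) => [|i l IH] //=.
by rewrite IH /vsub Rabs_minus_sym.
Qed.

Lemma l1norm_vsub_le u v : l1norm (vsub u v) <= l1norm u + l1norm v.
Proof.
apply: l1norm_triangle => i; rewrite /vsub -(Rabs_Ropp (v i)); exact: Rabs_triang.
Qed.

Lemma l1norm_le_vsub u v : l1norm u <= l1norm (vsub u v) + l1norm v.
Proof.
apply: l1norm_triangle => i; rewrite /vsub.
by have := Rabs_triang (u i - v i) (v i); rewrite Rplus_comm Rplus_minus.
Qed.

Lemma l1norm_vscale v c : 0 <= c -> l1norm (vscale c v) <= c * l1norm v.
Proof.
move=> hc; apply: l1norm_scale => // i; rewrite /vscale Rabs_mult Rabs_pos_eq //; lra.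
Qed.

Lemma l1norm_sum5 u a b c d e :
  (forall i, u i = a i + b i + c i - d i - e i) ->
  l1norm u <= l1norm a + l1norm b + l1norm c + l1norm d + l1norm e.
Proof.
move=> H; rewrite /l1norm; elim: (enum 'I_n) => [|i l IH] /=; first lra.
rewrite H; suff : Rabs (a i + b i + c i - d i - e i) <=
  Rabs (a i) + Rabs (b i) + Rabs (c i) + Rabs (d i) + Rabs (e i) by lra.
have := Rabs_triang (a i + b i + c i - d i) (- e i).
have := Rabs_triang (a i + b i + c i) (- d i).
have := Rabs_triang (a i + b i) (c i); have := Rabs_triang (a i) (b i).
rewrite !Rabs_Ropp /Rminus; lra.
Qed.

Lemma vconv_l1norm {u : nat -> Vec n} {l} : vconv u l ->
  forall e, 0 < e -> exists N0, forall N, (N0 <= N)%N -> l1norm (vsub (u N) l) <= e.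
Proof.
move=> H e he; have hn : 0 < INR n + 1 by have := pos_INR n; lra.
have [N0 HN] := H (e / (INR n + 1)) (Rdiv_lt_0_compat _ _ he hn).
exists N0 => N /HN hN.
have := l1norm_le_vnorm (vsub (u N) l); have := pos_INR n.
have : (INR n + 1) * vnorm (vsub (u N) l) <= (INR n + 1) * (e / (INR n + 1)).
  apply: Rmult_le_compat_l; lra.
have -> : (INR n + 1) * (e / (INR n + 1)) = e by field; lra.
have := sqrt_pos (sqnorm (vsub (u N) l)); rewrite -/(vnorm _); nra.
Qed.

Lemma vsum_vsub_coord (a b : nat -> Vec n) N i :
  vsum (fun k => vsub (a k) (b k)) N i = vsum a N i - vsum b N i.
Proof.
elim: N => [|N IH] /=; first (rewrite /vzero; ring).
by rewrite /vadd IH /vsub; ring.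
Qed.

Lemma vsum_vsub_const_coord (a : nat -> Vec n) (c : Vec n) N i :
  vsum (fun k => vsub (a k) c) N i = vsum a N i - INR N * c i.
Proof.
elim: N => [|N IH]; first (rewrite /= /vzero; ring).
by rewrite S_INR /= /vadd IH /vsub; ring.
Qed.

Lemma l1norm_vsum_le (g : nat -> Vec n) N C :
  (forall k, (k < N)%N -> l1norm (g k) <= C) -> l1norm (vsum g N) <= INR N * C.
Proof.
elim: N => [|N IH] H; first by rewrite /= l1norm_eq0 //; lra.
rewrite S_INR /=.
have h1 := IH (fun k hk => H k (ltnW hk)); have h2 := H N (ltnSn N).
have : l1norm (vadd (vsum g N) (g N)) <= l1norm (vsum g N) + l1norm (g N).
  by apply: l1norm_triangle => i; exact: Rabs_triang.
lra.
Qed.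

End L1Norm.

Lemma l1norm_lipschitz_bounded {n k} {g : Vec n -> Vec k} {L r : R} : 0 <= L -> 0 <= r ->
  (forall z1 z2, l1norm z1 <= r -> l1norm z2 <= r ->
     l1norm (vsub (g z1) (g z2)) <= L * l1norm (vsub z1 z2)) ->
  forall z, l1norm z <= r -> l1norm (g z) <= l1norm (g vzero) + L * r.
Proof.
move=> hL hr Hg z hz; have h0 : l1norm (@vzero n) = 0 by apply: l1norm_eq0.
have := Hg z vzero hz ltac:(lra); have := l1norm_le_vsub (g z) (g vzero).
have := l1norm_vsub_le z vzero; rewrite h0 => hz0.
have := Rmult_le_compat_l L _ _ hL (Rle_trans _ _ _ hz0 (Rplus_le_compat_r 0 _ _ hz)); lra.
Qed.

Section NullSets.
Context {Omega : Type} {null : (Omega -> Prop) -> Prop}.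
Hypothesis Hnull : null_ideal null.

Lemma almost_surely_mono {P Q : Omega -> Prop} :
  (forall w, P w -> Q w) -> almost_surely null P -> almost_surely null Q.
Proof. by move=> PQ [N [hN HN]]; exists N; split => // w /HN /PQ. Qed.

Lemma almost_surely_countable {P : nat -> Omega -> Prop} :
  (forall k, almost_surely null (P k)) -> almost_surely null (fun w => forall k, P k w).
Proof.
move=> H; have [Hsub [Hun _]] := Hnull.
exists (fun w => exists k, ~ P k w); split => [|w hw k]; last first.
  by apply: NNPP => hk; apply: hw; exists k.
apply: Hun => k; have [N [hN HN]] := H k.
by apply: (Hsub _ N hN) => w hw; apply: NNPP => /HN.
Qed.

Lemma almost_surely_and {P Q : Omega -> Prop} :
  almost_surely null P -> almost_surely null Q -> almost_surely null (fun w => P w /\ Q w).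
Proof.
move=> hP hQ.
have hPQ := @almost_surely_countable (fun k => if k is 0%N then P else Q).
apply: almost_surely_mono (hPQ _) => [w H|[|k] //].
by split; [exact: (H 0%N)|exact: (H 1%N)].
Qed.

Lemma almost_surely_exists {P : Omega -> Prop} : almost_surely null P -> exists w, P w.
Proof.
move=> [N [hN HN]]; have [Hsub [_ Hnt]] := Hnull.
apply: NNPP => hP; apply: Hnt; apply: (Hsub _ N hN) => w _.
by apply: NNPP => /HN hw; apply: hP; exists w.
Qed.

End NullSets.

Section Lipschitz.
Context {n m : nat} {f : Vec n -> Vec m -> Vec n} {SY : Vec m -> Prop}.

Lemma l1norm_local_lipschitz :
  (forall r, exists kD, forall x1 x2 y, vnorm x1 <= r -> vnorm x2 <= r -> SY y ->
     vnorm (vsub (f x1 y) (f x2 y)) <= kD * vnorm (vsub x1 x2)) ->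
  forall r, exists L, 0 < L /\ forall z1 z2 y, l1norm z1 <= r -> l1norm z2 <= r -> SY y ->
    l1norm (vsub (f z1 y) (f z2 y)) <= L * l1norm (vsub z1 z2).
Proof.
move=> Hlip r; have [kD HkD] := Hlip r.
exists (INR n * Rabs kD + 1); split; first by have := pos_INR n; have := Rabs_pos kD; nra.
move=> z1 z2 y h1 h2 hy.
have e1 := HkD z1 z2 y (Rle_trans _ _ _ (vnorm_le_l1norm z1) h1)
  (Rle_trans _ _ _ (vnorm_le_l1norm z2) h2) hy.
have e2 := l1norm_le_vnorm (vsub (f z1 y) (f z2 y)).
have e3 := vnorm_le_l1norm (vsub z1 z2).
have e4 := sqrt_pos (sqnorm (vsub z1 z2)); rewrite -/(vnorm _) in e4.
have e5 : kD * vnorm (vsub z1 z2) <= Rabs kD * l1norm (vsub z1 z2).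
  by have := Rle_abs kD; have := Rabs_pos kD; nra.
have := pos_INR n; have := l1norm_ge0 (vsub z1 z2); nra.
Qed.

Lemma ergavg_lipschitz {Yw : nat -> Vec m} (HY : forall k, SY (Yw k)) L z1 z2 N :
  (forall y, SY y -> l1norm (vsub (f z1 y) (f z2 y)) <= L * l1norm (vsub z1 z2)) ->
  l1norm (vsub (ergavg f Yw z1 N) (ergavg f Yw z2 N)) <= L * l1norm (vsub z1 z2).
Proof.
move=> H; have hN : 0 < INR (N + 1) by apply: lt_0_INR; rewrite addn1; apply/leP.
set D := vsum (fun k => vsub (f z1 (Yw (k + 1)%N)) (f z2 (Yw (k + 1)%N))) (N + 1).
have hD : l1norm D <= INR (N + 1) * (L * l1norm (vsub z1 z2)).
  by apply: l1norm_vsum_le => k _; exact: H.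
have hinv : 0 <= / INR (N + 1) by apply/Rlt_le/Rinv_0_lt_compat.
apply: Rle_trans (_ : / INR (N + 1) * l1norm D <= _).
  apply: l1norm_scale => // i.
  rewrite /ergavg /vsub /vscale /D vsum_vsub_coord -Rmult_minus_distr_l Rabs_mult.
  by rewrite (Rabs_pos_eq _ hinv); lra.
have := Rmult_le_compat_l _ _ _ hinv hD.
by have -> : / INR (N + 1) * (INR (N + 1) * (L * l1norm (vsub z1 z2))) =
  L * l1norm (vsub z1 z2) by field; lra.
Qed.

Lemma averaged_field_lipschitz {Omega : Type} {null : (Omega -> Prop) -> Prop}
  {Y : Omega -> nat -> Vec m} {fbar : Vec n -> Vec n} (Hnull : null_ideal null)
  (HY : forall w k, SY (Y w k))
  (Herg : forall x0, almost_surely null (fun w => vconv (ergavg f (Y w) x0) (fbar x0)))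
  L z1 z2 :
  (forall y, SY y -> l1norm (vsub (f z1 y) (f z2 y)) <= L * l1norm (vsub z1 z2)) ->
  l1norm (vsub (fbar z1) (fbar z2)) <= L * l1norm (vsub z1 z2).
Proof.
move=> H; have [w [c1 c2]] := almost_surely_exists Hnull
  (almost_surely_and Hnull (Herg z1) (Herg z2)).
apply: le_epsilon => e he.
have [M1 HM1] := vconv_l1norm c1 (e / 2) ltac:(lra).
have [M2 HM2] := vconv_l1norm c2 (e / 2) ltac:(lra).
have d1 := HM1 _ (leq_maxl M1 M2); have d2 := HM2 _ (leq_maxr M1 M2).
have d3 := ergavg_lipschitz (HY w) _ _ _ (maxn M1 M2) H.
have t1 := l1norm_vsub_triangle (fbar z1) (ergavg f (Y w) z1 (maxn M1 M2)) (fbar z2).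
have t2 := l1norm_vsub_triangle (ergavg f (Y w) z1 (maxn M1 M2))
  (ergavg f (Y w) z2 (maxn M1 M2)) (fbar z2).
rewrite l1norm_vsub_sym in d1; lra.
Qed.

End Lipschitz.

(* Only right continuity is assumed at the left end point, since the averaged
   solution is differentiable on (0, oo) only. *)
Lemma mean_value_bound (g g' : R -> R) a b M : a <= b ->
  (forall c, a < c <= b -> derivable_pt_lim g c (g' c)) ->
  (forall c, a < c <= b -> Rabs (g' c) <= M) ->
  (forall e, 0 < e -> exists d, 0 < d /\ forall s, a < s < a + d -> Rabs (g s - g a) < e) ->
  Rabs (g b - g a) <= M * (b - a).
Proof.
move=> hab Hd Hb Hc; case: (Rle_lt_or_eq_dec _ _ hab) => [hlt|<-]; last first.
  by rewrite Rminus_diag Rabs_R0; lra.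
have hM : 0 <= M by have := Hb b (conj hlt (Rle_refl b)); have := Rabs_pos (g' b); lra.
apply: le_epsilon => e he; have [d [hd H]] := Hc e he.
have hm := Rmin_l d (b - a); have hm' := Rmin_r d (b - a).
have hm0 : 0 < Rmin d (b - a) by apply: Rmin_pos; lra.
set a' := a + Rmin d (b - a) / 2.
have [c [hc1 hc2]] := MVT_cor2 g g' a' b ltac:(rewrite /a'; lra)
  (fun c hc => Hd c ltac:(rewrite /a' in hc; lra)).
have h1 := H a' ltac:(rewrite /a'; lra).
have h2 : Rabs (g b - g a') <= M * (b - a).
  rewrite hc1 Rabs_mult (Rabs_pos_eq (b - a')); last by rewrite /a'; lra.
  have := Hb c ltac:(rewrite /a' in hc2; lra); have := Rabs_pos (g' c).
  rewrite /a' in hc2 *; nra.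
have := Rabs_triang (g b - g a') (g a' - g a).
have -> : g b - g a' + (g a' - g a) = g b - g a by ring.
lra.
Qed.

Lemma finite_upper_bound {n} (P : 'I_n -> R -> Prop) :
  (forall i B B', P i B -> B <= B' -> P i B') -> (forall i, exists B, P i B) ->
  exists B, forall i, P i B.
Proof.
move=> Hm Hex.
suff [B HB] : exists B, forall i, i \in enum 'I_n -> P i B.
  by exists B => i; apply: HB; rewrite mem_enum.
elim: (enum 'I_n) => [|a l [Bl HBl]]; first by exists 0.
have [Ba HBa] := Hex a; exists (Rmax Ba Bl) => i; rewrite in_cons => /orP [/eqP ->|h].
  exact: Hm HBa (Rmax_l _ _).
exact: Hm (HBl i h) (Rmax_r _ _).
Qed.

Section AveragedSolution.
Context {n : nat} {fbar : Vec n -> Vec n} {x : Vec n} {Xc : R -> Vec n}.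
Hypothesis HXc0 : Xc 0 = x.
Hypothesis HXc0cont : forall e, 0 < e -> exists d, 0 < d /\
  forall t, 0 <= t < d -> vnorm (vsub (Xc t) x) < e.
Hypothesis HXcder : forall t, 0 < t -> forall i : 'I_n,
  derivable_pt_lim (fun s => Xc s i) t (fbar (Xc t) i).

Lemma averaged_solution_continuous i a : 0 <= a -> forall e, 0 < e -> exists d, 0 < d /\
  forall s, 0 <= s -> Rabs (s - a) < d -> Rabs (Xc s i - Xc a i) < e.
Proof.
move=> ha e he; case: (Rle_lt_or_eq_dec _ _ ha) => [hpos|<-].
  have [d [hd H]] := derivable_continuous_pt _ _ (exist _ _ (HXcder a hpos i)) e he.
  exists d; split => // s _ hs; case: (Req_dec s a) => [->|hne].
    by rewrite Rminus_diag Rabs_R0.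
  exact: (H s (conj (conj I (not_eq_sym hne)) hs)).
have [d [hd H]] := HXc0cont e he; exists d; split => // s hs hsd.
rewrite HXc0; apply: Rle_lt_trans (coord_le_vnorm (vsub (Xc s) x) i) _.
by apply: H; rewrite Rminus_0_r Rabs_pos_eq in hsd; lra.
Qed.

Lemma averaged_solution_bounded U : 0 <= U ->
  exists B, 0 <= B /\ forall s, 0 <= s <= U -> l1norm (Xc s) <= B.
Proof.
move=> hU.
have Hi i : exists B, forall s, 0 <= s <= U -> Rabs (Xc s i) <= B.
  pose h s := Xc (Rmax 0 s) i.
  have hcont c : 0 <= c <= U -> continuity_pt h c.
    move=> hc e he; have [d [hd H]] := averaged_solution_continuous i c (proj1 hc) e he.
    exists d; split => // s [_ hs]; rewrite /= /R_dist /h (Rmax_right 0 c) in hs * => //; last lra.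
    have hmax : Rabs (Rmax 0 s - c) <= Rabs (s - c).
      rewrite /Rmax; case: Rle_dec => h0; first lra.
      rewrite Rminus_0_l Rabs_Ropp (Rabs_pos_eq c) ?(Rabs_left (s - c)); lra.
    apply: H; [exact: Rmax_l | lra].
  have [M1 [HM1 _]] := continuity_ab_maj h 0 U hU hcont.
  have [M2 [HM2 _]] := continuity_ab_min h 0 U hU hcont.
  exists (Rabs (h M1) + Rabs (h M2)) => s hs.
  have -> : Xc s i = h s by rewrite /h Rmax_right; lra.
  have := HM1 s hs; have := HM2 s hs; have := Rle_abs (h M1); have := Rabs_pos (h M1).
  have := Rle_abs (- h M2); have := Rabs_pos (h M2); rewrite Rabs_Ropp => *.
  apply: Rabs_le; lra.
have [B HB] := finite_upper_bound (fun i B => forall s, 0 <= s <= U -> Rabs (Xc s i) <= B)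
  (fun i B B' H hle s hs => Rle_trans _ _ _ (H s hs) hle) Hi.
exists (INR n * Rmax 0 B); split; first by apply: Rmult_le_pos; [exact: pos_INR|exact: Rmax_l].
by move=> s hs; apply: l1norm_le_const => i; apply: Rle_trans (HB i s hs) (Rmax_r _ _).
Qed.

Lemma averaged_solution_lipschitz U Fb :
  (forall c, 0 < c <= U -> l1norm (fbar (Xc c)) <= Fb) ->
  forall s t, 0 <= s -> s <= t -> t <= U ->
  l1norm (vsub (Xc t) (Xc s)) <= INR n * Fb * (t - s).
Proof.
move=> HF s t hs hst htU; rewrite Rmult_assoc; apply: l1norm_le_const => i.
apply: (mean_value_bound (fun u => Xc u i) (fun c => fbar (Xc c) i)) => //.
- by move=> c hc; apply: HXcder; lra.
- by move=> c hc; apply: Rle_trans (coord_le_l1norm _ i) _; apply: HF; lra.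
- move=> e he; have [d [hd H]] := averaged_solution_continuous i s hs e he.
  by exists d; split => // u hu; apply: H; [lra | rewrite Rabs_pos_eq; lra].
Qed.

Lemma averaged_solution_step s h Q : 0 <= s -> 0 < h ->
  (forall c, s < c <= s + h -> l1norm (vsub (fbar (Xc c)) (fbar (Xc s))) <= Q) ->
  l1norm (vsub (vsub (Xc (s + h)) (Xc s)) (vscale h (fbar (Xc s)))) <= INR n * (Q * h).
Proof.
move=> hs hh HQ; apply: l1norm_le_const => i; rewrite /vsub /vscale.
set C := fbar (Xc s) i.
have -> : Xc (s + h) i - Xc s i - h * C = (Xc (s + h) i - C * (s + h)) - (Xc s i - C * s)
  by ring.
have -> : Q * h = Q * (s + h - s) by ring.
apply: (mean_value_bound (fun u => Xc u i - C * u) (fun c => fbar (Xc c) i - C * 1)); first lra.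
- move=> c hc; apply: (derivable_pt_lim_minus (fun u => Xc u i) (mult_real_fct C id)).
    by apply: HXcder; lra.
  exact: derivable_pt_lim_scal (derivable_pt_lim_id c).
- move=> c hc; rewrite Rmult_1_r; apply: Rle_trans _ (HQ c hc).
  exact: (coord_le_l1norm (vsub (fbar (Xc c)) (fbar (Xc s))) i).
- move=> e he; have [d1 [hd1 H]] := averaged_solution_continuous i s hs (e / 2) ltac:(lra).
  have hC := Rabs_pos C; set d2 := e / (2 * (Rabs C + 1)).
  have hd2 : 0 < d2 by apply: Rdiv_lt_0_compat; lra.
  have hCd2 : Rabs C * d2 < e / 2.
    by rewrite /d2; apply: (Rmult_lt_reg_r (2 * (Rabs C + 1))); [lra | field_simplify; lra].
  exists (Rmin d1 d2); split; first exact: Rmin_pos.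
  move=> u hu; have hm1 := Rmin_l d1 d2; have hm2 := Rmin_r d1 d2.
  have h1 := H u ltac:(lra) ltac:(rewrite Rabs_pos_eq; lra).
  have -> : Xc u i - C * u - (Xc s i - C * s) = (Xc u i - Xc s i) + - (C * (u - s)) by ring.
  apply: Rle_lt_trans (Rabs_triang _ _) _.
  rewrite Rabs_Ropp Rabs_mult (Rabs_pos_eq (u - s)); last lra.
  have : Rabs C * (u - s) <= Rabs C * d2 by apply: Rmult_le_compat_l; lra.
  lra.
Qed.

Lemma averaged_solution_step_quadratic U L K : 0 <= L -> 0 <= K ->
  (forall s c, 0 <= s -> s <= c -> c <= U ->
     l1norm (vsub (fbar (Xc c)) (fbar (Xc s))) <= L * l1norm (vsub (Xc c) (Xc s))) ->
  (forall s t, 0 <= s -> s <= t -> t <= U -> l1norm (vsub (Xc t) (Xc s)) <= K * (t - s)) ->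
  forall s h, 0 <= s -> 0 < h -> s + h <= U ->
  l1norm (vsub (vsub (Xc (s + h)) (Xc s)) (vscale h (fbar (Xc s)))) <= INR n * (L * K * h) * h.
Proof.
move=> hL hK Hfbar HXc s h hs hh hU; rewrite Rmult_assoc.
apply: averaged_solution_step => // c hc.
apply: Rle_trans (Hfbar s c hs ltac:(lra) ltac:(lra)) _; rewrite Rmult_assoc.
apply: Rmult_le_compat_l => //; apply: Rle_trans (HXc s c hs ltac:(lra) ltac:(lra)) _.
apply: Rmult_le_compat_l; lra.
Qed.

End AveragedSolution.

Definition nfloor (r : R) : nat := Z.to_nat (Int_part r).

Lemma nfloor_spec {r} : 0 <= r -> INR (nfloor r) <= r < INR (nfloor r) + 1.
Proof.
move=> hr; have [h1 h2] := base_Int_part r.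
have h3 : (-1 < Int_part r)%Z by apply: lt_IZR; lra.
have hz : (0 <= Int_part r)%Z by lia.
by rewrite /nfloor INR_IZR_INZ Z2Nat.id //; lra.
Qed.

Lemma nfloor_le r s : 0 <= r -> r <= s -> (nfloor r <= nfloor s)%N.
Proof.
move=> hr hrs; have [a1 a2] := nfloor_spec hr.
have [b1 b2] := nfloor_spec (Rle_trans _ _ _ hr hrs).
have /INR_lt : INR (nfloor r) < INR (nfloor s + 1)%coq_nat by rewrite plus_INR /=; lra.
by move=> h; apply/leP; lia.
Qed.

Lemma nfloor_grid {r t} : 0 < r -> 0 <= t ->
  0 <= INR (nfloor (t * r)) / r <= t /\ t - INR (nfloor (t * r)) / r <= / r.
Proof.
move=> hr ht; have [h1 h2] := nfloor_spec (Rmult_le_pos _ _ ht (Rlt_le _ _ hr)).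
have hq : INR (nfloor (t * r)) / r * r = INR (nfloor (t * r)) by field; lra.
split; [split|].
- by apply: Rmult_le_pos; [exact: pos_INR | apply/Rlt_le/Rinv_0_lt_compat].
- by apply: (Rmult_le_reg_r r) => //; rewrite hq.
- apply: (Rmult_le_reg_r r) => //; rewrite Rmult_minus_distr_r hq Rinv_l; lra.
Qed.

Lemma grid_fine a b : 0 < b -> exists M, a / INR M.+1 <= b.
Proof.
move=> hb; have hab : 0 <= Rabs a / b.
  by apply: Rmult_le_pos; [exact: Rabs_pos | apply/Rlt_le/Rinv_0_lt_compat].
have [_ h2] := nfloor_spec hab; set M := nfloor (Rabs a / b) in h2 *.
exists M; have hM : 0 < INR M.+1 by apply: lt_0_INR; lia.
apply: (Rmult_le_reg_r (INR M.+1)) => //.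
have -> : a / INR M.+1 * INR M.+1 = a by field; lra.
have : Rabs a / b * b < INR M.+1 * b by rewrite S_INR; apply: Rmult_lt_compat_r.
have -> : Rabs a / b * b = Rabs a by field; lra.
have := Rle_abs a; lra.
Qed.

Lemma mul_lt_of_lt_div {a b eps : R} : 0 <= a -> 0 < eps -> eps < b / (a + 1) -> a * eps < b.
Proof.
move=> ha he hb; have := Rmult_lt_compat_l (a + 1) _ _ ltac:(lra) hb.
have -> : (a + 1) * (b / (a + 1)) = b by field; lra.
lra.
Qed.

Lemma common_threshold (P : nat -> R -> Prop) :
  (forall j d d', P j d -> 0 < d' <= d -> P j d') ->
  (forall j, exists d, 0 < d /\ P j d) ->
  forall J, exists d, 0 < d /\ forall j, (j <= J)%N -> P j d.
Proof.
move=> Hm Hex; elim=> [|J [d [hd Hd]]].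
  by have [d [hd Hd]] := Hex 0%N; exists d; split => // j; rewrite leqn0 => /eqP ->.
have [d' [hd' Hd']] := Hex J.+1; have hmin := Rmin_pos _ _ hd hd'.
exists (Rmin d d'); split => // j; rewrite leq_eqVlt => /orP [/eqP ->|hj].
  by apply: Hm Hd' _; split => //; exact: Rmin_r.
by apply: Hm (Hd j hj) _; split => //; exact: Rmin_l.
Qed.

Definition fluctuation {n m} (f : Vec n -> Vec m -> Vec n) (fbar : Vec n -> Vec n)
  (Yw : nat -> Vec m) (z : Vec n) (k : nat) : Vec n :=
  vsub (f z (Yw (k + 1)%N)) (fbar z).

Section ErgodicSums.
Context {n m : nat} (f : Vec n -> Vec m -> Vec n) (fbar : Vec n -> Vec n) (Yw : nat -> Vec m).

Lemma fluctuation_sum_ergavg z N :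
  l1norm (vsum (fluctuation f fbar Yw z) N.+1)
  <= INR N.+1 * l1norm (vsub (ergavg f Yw z N) (fbar z)).
Proof.
apply: l1norm_scale; first exact: pos_INR.
move=> i; rewrite vsum_vsub_const_coord /ergavg /vsub /vscale addn1.
have hN : INR N.+1 <> 0 by apply: not_0_INR.
have -> : vsum (fun k => f z (Yw (k + 1)%N)) N.+1 i - INR N.+1 * fbar z i =
  INR N.+1 * (/ INR N.+1 * vsum (fun k => f z (Yw (k + 1)%N)) N.+1 i - fbar z i)
  by field.
by rewrite Rabs_mult Rabs_pos_eq; [lra | exact: pos_INR].
Qed.

(* Short sums are small because each term is bounded, long ones because
   N eps <= W while the ergodic average of the terms tends to 0. *)
Lemma fluctuation_sum_small z B W phi : (forall y, vnorm (f z y) <= B) ->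
  vconv (ergavg f Yw z) (fbar z) -> 0 < W -> 0 < phi ->
  exists e1, 0 < e1 /\ forall eps, 0 < eps < e1 -> forall N, INR N * eps <= W ->
    l1norm (vscale eps (vsum (fluctuation f fbar Yw z) N)) <= phi.
Proof.
move=> HB Hc hW hphi.
set C := INR n * Rmax 0 B + l1norm (fbar z).
have hC : 0 <= C.
  by rewrite /C; have := pos_INR n; have := Rmax_l 0 B; have := l1norm_ge0 (fbar z); nra.
have hg k : l1norm (fluctuation f fbar Yw z k) <= C.
  apply: Rle_trans (l1norm_vsub_le _ _) _.
  have := l1norm_le_vnorm (f z (Yw (k + 1)%N)); have := HB (Yw (k + 1)%N).
  have := Rmax_r 0 B; have := pos_INR n; rewrite /C; nra.
have [N0 HN0] := vconv_l1norm Hc (phi / W) (Rdiv_lt_0_compat _ _ hphi hW).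
have hN0 : 0 < INR N0.+1 by apply: lt_0_INR; lia.
exists (phi / (INR N0.+1 * (C + 1))); split; first by apply: Rdiv_lt_0_compat; nra.
move=> eps [he1 he2] N hN.
apply: Rle_trans (l1norm_vscale _ _ (Rlt_le _ _ he1)) _.
case: (leqP N N0) => hNN.
  have h1 := l1norm_vsum_le _ N _ (fun k _ => hg k).
  have h2 : INR N <= INR N0.+1 by apply/le_INR/leP; exact: leqW.
  have h3 : eps * (INR N0.+1 * (C + 1)) < phi.
    have := Rmult_lt_compat_r (INR N0.+1 * (C + 1)) _ _ ltac:(nra) he2.
    by have -> : phi / (INR N0.+1 * (C + 1)) * (INR N0.+1 * (C + 1)) = phi by field; nra.
  have : INR N * C <= INR N0.+1 * (C + 1) by have := pos_INR N; nra.
  have := l1norm_ge0 (vsum (fluctuation f fbar Yw z) N); nra.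
case: N hN hNN => [|N] // hN hNN.
have hE := HN0 N hNN; have hS := fluctuation_sum_ergavg z N.
have : INR N.+1 * eps * (phi / W) <= W * (phi / W).
  by apply: Rmult_le_compat_r; [apply/Rlt_le/Rdiv_lt_0_compat | lra].
have -> : W * (phi / W) = phi by field; lra.
have := Rmult_le_compat_l eps _ _ (Rlt_le _ _ he1) hS.
have := Rmult_le_compat_l (INR N.+1 * eps) _ _ ltac:(have := pos_INR N.+1; nra) hE.
lra.
Qed.

End ErgodicSums.

(* Switching the summand from [g j] to [g j'] at an index [k] changes the partial
   sum by at most [2 phi], so each switch of the piecewise constant index costs
   [2 phi]. *)
Lemma switched_sum_bound {n} (g : nat -> nat -> Vec n) (jf : nat -> nat) eps T phi J :
  0 < eps -> 0 <= phi ->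
  (forall k, INR k.+1 * eps <= T -> (jf k <= jf k.+1)%N) ->
  (forall k, INR k * eps <= T -> (jf k <= J)%N) ->
  (forall j N, (j <= J)%N -> INR N * eps <= T + eps ->
     l1norm (vscale eps (vsum (g j) N)) <= phi) ->
  forall k, INR k * eps <= T ->
    l1norm (vscale eps (vsum (fun i => g (jf i) i) k)) <= phi * (2 * INR (jf k) + 1).
Proof.
move=> he hphi Hmono HJ Hphi.
pose S k := vscale eps (vsum (fun i => g (jf i) i) k).
pose Sj j k := vscale eps (vsum (g j) k).
have Hswitch k : INR k * eps <= T -> l1norm (vsub (S k) (Sj (jf k) k)) <= 2 * phi * INR (jf k).
  elim: k => [|k IH] hk.
    rewrite l1norm_eq0; first by have := pos_INR (jf 0%N); nra.
    by move=> i; rewrite /vsub /S /Sj /vscale /= /vzero; ring.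
  have hk' : INR k * eps <= T by rewrite S_INR in hk; lra.
  have hsplit : l1norm (vsub (S k.+1) (Sj (jf k.+1) k.+1))
      <= l1norm (vsub (S k) (Sj (jf k) k)) + l1norm (vsub (Sj (jf k) k.+1) (Sj (jf k.+1) k.+1)).
    apply: l1norm_triangle => i.
    have -> : vsub (S k.+1) (Sj (jf k.+1) k.+1) i
      = vsub (S k) (Sj (jf k) k) i + vsub (Sj (jf k) k.+1) (Sj (jf k.+1) k.+1) i.
      by rewrite /vsub /S /Sj /vscale /= /vadd; ring.
    exact: Rabs_triang.
  have IH' := IH hk'; have hm := Hmono k hk.
  case: (eqVneq (jf k.+1) (jf k)) => heq.
    rewrite heq in hsplit *; rewrite [l1norm (vsub (Sj _ _) _)]l1norm_eq0 in hsplit => //.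
      lra.
    by move=> i; rewrite /vsub; ring.
  have hjump : INR (jf k) + 1 <= INR (jf k.+1).
    by rewrite -S_INR; apply/le_INR/leP; rewrite ltn_neqAle eq_sym heq hm.
  have hT : INR k.+1 * eps <= T + eps by lra.
  have h1 : l1norm (Sj (jf k) k.+1) <= phi := Hphi _ _ (HJ k hk') hT.
  have h2 : l1norm (Sj (jf k.+1) k.+1) <= phi := Hphi _ _ (HJ k.+1 hk) hT.
  have := l1norm_vsub_le (Sj (jf k) k.+1) (Sj (jf k.+1) k.+1).
  have := Rmult_le_compat_l (2 * phi) _ _ ltac:(lra) hjump; lra.
move=> k hk; have := Hswitch k hk; have := Hphi (jf k) k (HJ k hk) ltac:(lra).
have := l1norm_le_vsub (S k) (Sj (jf k) k); rewrite /S /Sj; lra.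
Qed.

Lemma pow_le_exp a k : 0 <= a -> (1 + a) ^ k <= exp (a * INR k).
Proof.
move=> ha; elim: k => [|k IH]; first by rewrite /= Rmult_0_r exp_0; lra.
rewrite S_INR Rmult_plus_distr_l Rmult_1_r exp_plus /= Rmult_comm.
apply: Rmult_le_compat => //; [apply: pow_le | | exact: exp_ineq1_le]; lra.
Qed.

(* The one-step estimate is only available while [d k <= 1]; the bound being
   proved, together with the smallness hypothesis, keeps [d k] below 1. *)
Lemma discrete_gronwall {w d g : nat -> R} {eps L T Gb c E : R} :
  0 < eps -> 0 < L -> 0 <= Gb -> 0 <= c -> w 0%N <= 0 ->
  (forall k, INR k * eps <= T -> g k <= Gb) ->
  (forall k, d k <= w k + g k) ->
  (forall k, INR k.+1 * eps <= T -> d k <= 1 ->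
     w k.+1 <= w k + eps * L * d k + eps * c) ->
  (forall k, INR k * eps <= T -> (1 + eps * L) ^ k <= E) ->
  T * (L * Gb + c) * E + Gb <= 1 ->
  forall k, INR k * eps <= T -> w k <= INR k * eps * (L * Gb + c) * (1 + eps * L) ^ k.
Proof.
move=> he hL hG hc h0 Hg Hd Hstep HE Hsmall.
set D := L * Gb + c in Hsmall *; have hD : 0 <= D by rewrite /D; nra.
elim=> [|k IH] hk; first by rewrite /= Rmult_0_l; lra.
have hk' : INR k * eps <= T by rewrite S_INR in hk; lra.
have IH' := IH hk'; set P := (1 + eps * L) ^ k in IH' *.
have hP1 : 1 <= P by apply: pow_R1_Rle; nra.
have hPE : P <= E := HE k hk'.
have hkD : 0 <= INR k * eps * D.
  by apply: Rmult_le_pos => //; apply: Rmult_le_pos; [exact: pos_INR | lra].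
have hdk : d k <= 1.
  have : INR k * eps * D * P <= T * D * E.
    by apply: Rmult_le_compat => //; [nra | apply: Rmult_le_compat_r; lra].
  have := Hd k; have := Hg k hk'; lra.
have hw : w k.+1 <= (1 + eps * L) * w k + eps * D.
  have := Hstep k hk hdk.
  have : eps * L * d k <= eps * L * (w k + Gb).
    by apply: Rmult_le_compat_l; [nra | have := Hd k; have := Hg k hk'; lra].
  rewrite /D; nra.
have e1 : (1 + eps * L) * w k <= (1 + eps * L) * (INR k * eps * D * P).
  by apply: Rmult_le_compat_l; nra.
have e2 : eps * D <= eps * D * ((1 + eps * L) * P).
  have : 1 <= (1 + eps * L) * P by rewrite -(Rmult_1_l 1); apply: Rmult_le_compat; nra.
  have : 0 <= eps * D by apply: Rmult_le_pos; lra.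
  nra.
rewrite [(1 + eps * L) ^ k.+1]/= -/P S_INR.
have -> : (INR k + 1) * eps * D * ((1 + eps * L) * P) =
  (1 + eps * L) * (INR k * eps * D * P) + eps * D * ((1 + eps * L) * P) by ring.
lra.
Qed.

Section Tracking.
Context {n m : nat} {f : Vec n -> Vec m -> Vec n} {SY : Vec m -> Prop} {Yw : nat -> Vec m}
  {fbar : Vec n -> Vec n} {x : Vec n} {Xc : R -> Vec n} {T R0 L K : R}.
Hypothesis HY : forall k, SY (Yw k).
Hypothesis HT : 0 < T.
Hypothesis HL : 0 < L.
Hypothesis HK : 0 <= K.
Hypothesis HXc0 : Xc 0 = x.
Hypothesis HXc_bounded : forall s, 0 <= s <= T + 1 -> l1norm (Xc s) <= R0.
Hypothesis Hf_lipschitz : forall z1 z2 y, l1norm z1 <= R0 + 1 -> l1norm z2 <= R0 + 1 -> SY y ->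
  l1norm (vsub (f z1 y) (f z2 y)) <= L * l1norm (vsub z1 z2).
Hypothesis Hfbar_lipschitz : forall z1 z2, l1norm z1 <= R0 + 1 -> l1norm z2 <= R0 + 1 ->
  l1norm (vsub (fbar z1) (fbar z2)) <= L * l1norm (vsub z1 z2).
Hypothesis HXc_lipschitz : forall s t, 0 <= s -> s <= t -> t <= T + 1 ->
  l1norm (vsub (Xc t) (Xc s)) <= K * (t - s).
Hypothesis HXc_step : forall s h, 0 <= s -> 0 < h -> s + h <= T + 1 ->
  l1norm (vsub (vsub (Xc (s + h)) (Xc s)) (vscale h (fbar (Xc s)))) <= INR n * (L * K * h) * h.

Definition grid_point (M j : nat) : Vec n := Xc (INR j / INR M.+1).

Definition grid_index (M : nat) (eps : R) (k : nat) : nat := nfloor (INR k * eps * INR M.+1).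

Definition tracking_error (eps : R) (k : nat) : Vec n :=
  vsub (Xseq f Yw eps x k) (Xc (INR k * eps)).

Definition frozen_noise (M : nat) (eps : R) (k : nat) : Vec n :=
  vscale eps (vsum (fun i => fluctuation f fbar Yw (grid_point M (grid_index M eps i)) i) k).

Lemma grid_point_close M eps k : 0 <= INR k * eps -> INR k * eps <= T ->
  l1norm (grid_point M (grid_index M eps k)) <= R0 /\
  l1norm (vsub (Xc (INR k * eps)) (grid_point M (grid_index M eps k))) <= K / INR M.+1.
Proof.
move=> h0 hT; have hM : 0 < INR M.+1 by apply: lt_0_INR; lia.
set sj := INR (grid_index M eps k) / INR M.+1.
have [[hs0 hs1] hs2] : 0 <= sj <= INR k * eps /\ INR k * eps - sj <= / INR M.+1
  := nfloor_grid hM h0.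
split; first exact: HXc_bounded sj ltac:(lra).
apply: Rle_trans (HXc_lipschitz _ _ hs0 hs1 ltac:(lra)) _.
exact: Rmult_le_compat_l.
Qed.

Lemma tracking_error_step M eps k : 0 < eps -> INR k.+1 * eps <= T ->
  l1norm (tracking_error eps k) <= 1 ->
  l1norm (vsub (tracking_error eps k.+1) (frozen_noise M eps k.+1))
  <= l1norm (vsub (tracking_error eps k) (frozen_noise M eps k))
     + eps * L * l1norm (tracking_error eps k)
     + eps * (2 * L * K / INR M.+1 + INR n * L * K * eps).
Proof.
move=> he hk hd.
set tk := INR k * eps; set Xk := Xseq f Yw eps x k; set Yk := Yw (k + 1)%N.
set z := grid_point M (grid_index M eps k).
have htk0 : 0 <= tk by rewrite /tk; have := pos_INR k; nra.
have htk : tk + eps <= T by rewrite S_INR in hk; rewrite /tk; lra.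
have [hz hXcz] : l1norm z <= R0 /\ l1norm (vsub (Xc tk) z) <= K / INR M.+1
  := grid_point_close M eps k htk0 ltac:(rewrite -/tk; lra).
have hXc := HXc_bounded tk ltac:(lra).
have hd' : l1norm (vsub Xk (Xc tk)) <= 1 := hd.
have hXk : l1norm Xk <= R0 + 1 by have := l1norm_le_vsub Xk (Xc tk); lra.
have hLXcz : L * l1norm (vsub (Xc tk) z) <= L * K / INR M.+1.
  by rewrite /Rdiv Rmult_assoc; apply: Rmult_le_compat_l; lra.
have hsplit := l1norm_sum5
  (vsub (tracking_error eps k.+1) (frozen_noise M eps k.+1))
  (vsub (tracking_error eps k) (frozen_noise M eps k))
  (vscale eps (vsub (f Xk Yk) (f (Xc tk) Yk)))
  (vscale eps (vsub (f (Xc tk) Yk) (f z Yk)))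
  (vscale eps (vsub (fbar (Xc tk)) (fbar z)))
  (vsub (vsub (Xc (tk + eps)) (Xc tk)) (vscale eps (fbar (Xc tk)))).
lapply hsplit; clear hsplit; last first.
  move=> i; rewrite /tracking_error /frozen_noise /fluctuation S_INR.
  rewrite /tk /Xk /Yk /z /= /vsub /vadd /vscale addn1 Rmult_plus_distr_r Rmult_1_l; ring.
move=> hsplit.
have b1 : l1norm (vscale eps (vsub (f Xk Yk) (f (Xc tk) Yk)))
    <= eps * (L * l1norm (tracking_error eps k)).
  apply: Rle_trans (l1norm_vscale _ _ (Rlt_le _ _ he)) _.
  by apply: Rmult_le_compat_l; [lra | exact: Hf_lipschitz Xk (Xc tk) Yk hXk ltac:(lra) (HY _)].
have b2 : l1norm (vscale eps (vsub (f (Xc tk) Yk) (f z Yk))) <= eps * (L * K / INR M.+1).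
  apply: Rle_trans (l1norm_vscale _ _ (Rlt_le _ _ he)) _.
  apply: Rmult_le_compat_l; first lra.
  by apply: Rle_trans (Hf_lipschitz (Xc tk) z Yk ltac:(lra) ltac:(lra) (HY _)) hLXcz.
have b3 : l1norm (vscale eps (vsub (fbar (Xc tk)) (fbar z))) <= eps * (L * K / INR M.+1).
  apply: Rle_trans (l1norm_vscale _ _ (Rlt_le _ _ he)) _.
  apply: Rmult_le_compat_l; first lra.
  by apply: Rle_trans (Hfbar_lipschitz (Xc tk) z ltac:(lra) ltac:(lra)) hLXcz.
have b4 := HXc_step tk eps htk0 he ltac:(lra).
have -> : eps * (2 * L * K / INR M.+1 + INR n * L * K * eps)
  = eps * (L * K / INR M.+1) + eps * (L * K / INR M.+1) + INR n * (L * K * eps) * eps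
  by rewrite /Rdiv; ring.
lra.
Qed.

Lemma frozen_noise_bound M eps phi : 0 < eps -> 0 <= phi ->
  (forall j N, (j <= nfloor (T * INR M.+1))%N -> INR N * eps <= T + eps ->
     l1norm (vscale eps (vsum (fluctuation f fbar Yw (grid_point M j)) N)) <= phi) ->
  forall k, INR k * eps <= T ->
    l1norm (frozen_noise M eps k) <= phi * (2 * INR (nfloor (T * INR M.+1)) + 1).
Proof.
move=> he hphi Hphi k hk.
have hnonneg i : 0 <= INR i * eps * INR M.+1.
  by apply: Rmult_le_pos; [apply: Rmult_le_pos; [exact: pos_INR | lra] | exact: pos_INR].
apply: Rle_trans (switched_sum_bound
  (fun j => fluctuation f fbar Yw (grid_point M j)) (grid_index M eps) _ _ _ _
  he hphi _ _ Hphi k hk) _.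
- move=> i hi; apply: nfloor_le => //.
  by apply/Rmult_le_compat_r/Rmult_le_compat_r; [exact: pos_INR | lra | apply/le_INR/leP].
- by move=> i hi; apply: nfloor_le => //; apply: Rmult_le_compat_r; [exact: pos_INR | lra].
- apply: Rmult_le_compat_l => //; apply: Rplus_le_compat_r; apply: Rmult_le_compat_l; first lra.
  by apply/le_INR/leP/nfloor_le => //; apply: Rmult_le_compat_r; [exact: pos_INR | lra].
Qed.

(* Each hypothesis takes a third of the error budget [tau]: the frozen noise,
   the grid mesh and the step size. *)
Lemma tracking_error_small M eps phi tau : 0 < eps -> 0 <= phi -> tau <= 1 ->
  (forall j N, (j <= nfloor (T * INR M.+1))%N -> INR N * eps <= T + eps ->
     l1norm (vscale eps (vsum (fluctuation f fbar Yw (grid_point M j)) N)) <= phi) ->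
  (T * exp (L * T) * L + 1) * (phi * (2 * INR (nfloor (T * INR M.+1)) + 1)) <= tau / 3 ->
  T * exp (L * T) * (2 * L * K / INR M.+1) <= tau / 3 ->
  T * exp (L * T) * (INR n * L * K * eps) <= tau / 3 ->
  forall k, INR k * eps <= T -> l1norm (tracking_error eps k) <= tau.
Proof.
move=> he hphi htau Hphi hnoise hmesh hstep.
set Gb := phi * (2 * INR (nfloor (T * INR M.+1)) + 1) in hnoise.
set c := 2 * L * K / INR M.+1 + INR n * L * K * eps.
have hM : 0 < INR M.+1 by apply: lt_0_INR; lia.
have hGb : 0 <= Gb by rewrite /Gb; have := pos_INR (nfloor (T * INR M.+1)); nra.
have hc : 0 <= c.
  have hLK : 0 <= L * K by nra.
  have hi := Rlt_le _ _ (Rinv_0_lt_compat _ hM).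
  rewrite /c /Rdiv; apply: Rplus_le_le_0_compat.
  - by have := Rmult_le_pos _ _ hLK hi; nra.
  - by have := Rmult_le_pos _ _ (pos_INR n) hLK; nra.
have Hsmall : T * (L * Gb + c) * exp (L * T) + Gb <= tau.
  have -> : T * (L * Gb + c) * exp (L * T) + Gb = (T * exp (L * T) * L + 1) * Gb
    + T * exp (L * T) * (2 * L * K / INR M.+1) + T * exp (L * T) * (INR n * L * K * eps)
    by rewrite /c; ring.
  lra.
have Hnoise := frozen_noise_bound M eps phi he hphi Hphi.
have HE k : INR k * eps <= T -> (1 + eps * L) ^ k <= exp (L * T).
  move=> hk; apply: Rle_trans (pow_le_exp _ k (Rlt_le _ _ (Rmult_lt_0_compat _ _ he HL))) _.
  have : eps * L * INR k <= L * T by have := pos_INR k; nra.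
  case/Rle_lt_or_eq_dec => [/exp_increasing|->]; lra.
have hW0 : l1norm (vsub (tracking_error eps 0) (frozen_noise M eps 0)) <= 0.
  rewrite l1norm_eq0 => [|i]; first lra.
  by rewrite /tracking_error /frozen_noise /vsub /vscale /= /vzero Rmult_0_l HXc0; ring.
have Hd k : l1norm (tracking_error eps k)
    <= l1norm (vsub (tracking_error eps k) (frozen_noise M eps k)) + l1norm (frozen_noise M eps k).
  exact: l1norm_le_vsub.
have HG := discrete_gronwall he HL hGb hc hW0 Hnoise Hd
  (fun k hk => tracking_error_step M eps k he hk) HE ltac:(lra).
move=> k hk; have := HG k hk; have := Hd k; have := Hnoise k hk.
have : INR k * eps * (L * Gb + c) * (1 + eps * L) ^ k <= T * (L * Gb + c) * exp (L * T).
  have hk0 : 0 <= INR k * eps * (L * Gb + c).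
    by apply: Rmult_le_pos; [apply: Rmult_le_pos; [exact: pos_INR | lra] | nra].
  apply: Rmult_le_compat => //; first by apply: pow_le; nra.
    by apply: Rmult_le_compat_r; nra.
  exact: HE.
rewrite -/Gb; lra.
Qed.

Lemma Xcont_close eps tau eta : 0 < eps ->
  (forall k, INR k * eps <= T -> l1norm (tracking_error eps k) <= tau) ->
  tau <= eta / 2 -> K * eps <= eta / 2 ->
  forall t, 0 <= t <= T -> vnorm (vsub (Xcont f Yw eps x t) (Xc t)) <= eta.
Proof.
move=> he Herr htau hKe t [ht0 htT].
have hte : 0 <= t / eps by apply: Rmult_le_pos; [lra | apply/Rlt_le/Rinv_0_lt_compat].
have [hk1 hk2] := nfloor_spec hte; set k := nfloor (t / eps) in hk1 hk2.
have hq : t / eps * eps = t by field; lra.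
have hka : INR k * eps <= t by rewrite -hq; apply: Rmult_le_compat_r; lra.
have hkb : t - INR k * eps <= eps.
  by have := Rmult_le_compat_r eps _ _ (Rlt_le _ _ he) (Rlt_le _ _ hk2); rewrite hq; lra.
have hk0 : 0 <= INR k * eps by apply: Rmult_le_pos; [exact: pos_INR | lra].
apply: Rle_trans (vnorm_le_l1norm _) _; change (Xcont f Yw eps x t) with (Xseq f Yw eps x k).
have := l1norm_vsub_triangle (Xseq f Yw eps x k) (Xc (INR k * eps)) (Xc t).
have : l1norm (vsub (Xseq f Yw eps x k) (Xc (INR k * eps))) <= tau := Herr k ltac:(lra).
have := HXc_lipschitz _ _ hk0 hka ltac:(lra); rewrite l1norm_vsub_sym.
have := Rmult_le_compat_l K _ _ HK hkb; lra.
Qed.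

Hypothesis Hf_bounded : forall z, exists B, forall y, vnorm (f z y) <= B.
Hypothesis Hergodic : forall M j,
  vconv (ergavg f Yw (grid_point M j)) (fbar (grid_point M j)).

Lemma grid_fluctuations_small M phi : 0 < phi -> exists d, 0 < d /\
  forall eps, 0 < eps < d -> forall j N, (j <= nfloor (T * INR M.+1))%N ->
    INR N * eps <= T + 1 ->
    l1norm (vscale eps (vsum (fluctuation f fbar Yw (grid_point M j)) N)) <= phi.
Proof.
move=> hphi.
have [d [hd Hd]] := common_threshold (fun j d => forall eps, 0 < eps < d ->
    forall N, INR N * eps <= T + 1 ->
    l1norm (vscale eps (vsum (fluctuation f fbar Yw (grid_point M j)) N)) <= phi)
  (fun j d d' H hd eps he => H eps ltac:(lra))
  (fun j => let: ex_intro B HB := Hf_bounded (grid_point M j) in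
     fluctuation_sum_small f fbar Yw _ _ (T + 1) _ HB (Hergodic M j) ltac:(lra) hphi)
  (nfloor (T * INR M.+1)).
by exists d; split => // eps heps j N hj; apply: Hd.
Qed.

Lemma Xcont_tracks eta : 0 < eta -> exists delta, 0 < delta /\
  forall eps, 0 < eps < delta -> forall t, 0 <= t <= T ->
    vnorm (vsub (Xcont f Yw eps x t) (Xc t)) <= eta.
Proof.
move=> heta; set tau := Rmin 1 (eta / 2).
have htau : 0 < tau by apply: Rmin_pos; lra.
have htau1 := Rmin_l 1 (eta / 2); have htau2 := Rmin_r 1 (eta / 2); rewrite -/tau in htau1 htau2.
set E := exp (L * T); have hE : 0 < E := exp_pos _.
have hTEL : 0 < T * E * L by apply: Rmult_lt_0_compat => //; exact: Rmult_lt_0_compat.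
have [M hM] := grid_fine (T * E * (2 * L * K)) (tau / 3) ltac:(lra).
set J := nfloor (T * INR M.+1); have hJ := pos_INR J.
set phi := tau / (3 * (T * E * L + 1) * (2 * INR J + 1)).
have hphi : 0 < phi by apply: Rdiv_lt_0_compat => //; nra.
have [d1 [hd1 Hd1]] := grid_fluctuations_small M phi hphi.
set a := T * E * (INR n * L * K).
have ha : 0 <= a.
  have hLK : 0 <= L * K by nra.
  apply: Rmult_le_pos; first by apply: Rmult_le_pos; lra.
  by rewrite Rmult_assoc; exact: Rmult_le_pos (pos_INR n) hLK.
exists (Rmin d1 (Rmin 1 (Rmin (tau / 3 / (a + 1)) (eta / 2 / (K + 1))))).
have hd3 : 0 < tau / 3 / (a + 1) by apply: Rdiv_lt_0_compat; lra.
have hd4 : 0 < eta / 2 / (K + 1) by apply: Rdiv_lt_0_compat; lra.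
split; first by apply: Rmin_pos => //; apply: Rmin_pos; [lra | exact: Rmin_pos].
move=> eps [he /Rmin_Rgt [hd1e /Rmin_Rgt [he1 /Rmin_Rgt [hae hKe]]]].
apply: (Xcont_close eps tau eta he _ htau2).
  apply: (tracking_error_small M eps phi tau he (Rlt_le _ _ hphi) htau1).
  - by move=> j N hj hN; apply: Hd1 => //; lra.
  - by rewrite -/E -/J /phi; right; field; lra.
  - by rewrite -/E; apply: Rle_trans hM; right; rewrite /Rdiv; ring.
  - have := mul_lt_of_lt_div ha he hae; rewrite /a -/E; lra.
exact/Rlt_le/(mul_lt_of_lt_div HK he hKe).
Qed.

End Tracking.

Theorem lemma1
  (Omega : Type) (null : (Omega -> Prop) -> Prop) (Hnull : null_ideal null)
  (n m : nat) (eps0 : R) (Heps0 : 0 < eps0)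
  (f : Vec n -> Vec m -> Vec n) (SY : Vec m -> Prop)
  (Y : Omega -> nat -> Vec m) (fbar : Vec n -> Vec n)
  (x : Vec n) (Xc : R -> Vec n)
  (HY : forall w k, SY (Y w k))
  (Hcont : forall (x0 : Vec n) (y0 : Vec m) (e : R), 0 < e ->
     exists d, 0 < d /\ forall (x1 : Vec n) (y1 : Vec m),
       vnorm (vsub x1 x0) < d -> vnorm (vsub y1 y0) < d ->
       vnorm (vsub (f x1 y1) (f x0 y0)) < e)
  (Hbdd : forall x0 : Vec n, exists B, forall y : Vec m, vnorm (f x0 y) <= B)
  (Hlip : forall r, exists kD, forall (x1 x2 : Vec n) (y : Vec m),
     vnorm x1 <= r -> vnorm x2 <= r -> SY y ->
     vnorm (vsub (f x1 y) (f x2 y)) <= kD * vnorm (vsub x1 x2))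
  (Herg : forall x0 : Vec n,
     almost_surely null (fun w => vconv (ergavg f (Y w) x0) (fbar x0)))
  (HXc0 : Xc 0 = x)
  (HXc0cont : forall e, 0 < e -> exists d, 0 < d /\
     forall t, 0 <= t < d -> vnorm (vsub (Xc t) x) < e)
  (HXcder : forall t, 0 < t -> forall i : 'I_n,
     derivable_pt_lim (fun s => Xc s i) t (fbar (Xc t) i)) :
  forall T, 0 < T ->
  almost_surely null (fun w =>
    forall eta, 0 < eta -> exists delta, 0 < delta /\
      forall eps, 0 < eps < eps0 -> eps < delta ->
        forall t, 0 <= t <= T ->
          vnorm (vsub (Xcont f (Y w) eps x t) (Xc t)) <= eta).
Proof.
move=> T hT.
have [R0 [hR0 HR0]] := averaged_solution_bounded HXc0 HXc0cont HXcder (T + 1) ltac:(lra).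
have [L [hL Hf_lip]] := l1norm_local_lipschitz Hlip (R0 + 1).
have Hfbar_lip z1 z2 : l1norm z1 <= R0 + 1 -> l1norm z2 <= R0 + 1 ->
    l1norm (vsub (fbar z1) (fbar z2)) <= L * l1norm (vsub z1 z2).
  by move=> h1 h2; apply: (averaged_field_lipschitz Hnull HY Herg) => y; exact: Hf_lip.
have Hfbar_bound := l1norm_lipschitz_bounded (r := R0 + 1) (Rlt_le _ _ hL) ltac:(lra) Hfbar_lip.
set K := INR n * (l1norm (fbar vzero) + L * (R0 + 1)).
have hK : 0 <= K by apply: Rmult_le_pos; [exact: pos_INR | have := l1norm_ge0 (fbar vzero); nra].
have HXc_lip : forall s t, 0 <= s -> s <= t -> t <= T + 1 ->
    l1norm (vsub (Xc t) (Xc s)) <= K * (t - s).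
  apply: (averaged_solution_lipschitz HXc0 HXc0cont HXcder) => c hc.
  by apply: Hfbar_bound; have := HR0 c ltac:(lra); lra.
have HXc_step := averaged_solution_step_quadratic HXc0 HXc0cont HXcder (T + 1) L K
  (Rlt_le _ _ hL) hK
  (fun s c hs hsc hc => Hfbar_lip (Xc c) (Xc s) ltac:(have := HR0 c ltac:(lra); lra)
     ltac:(have := HR0 s ltac:(lra); lra)) HXc_lip.
have Hgood := almost_surely_countable Hnull (fun M =>
  almost_surely_countable Hnull (fun j => Herg (Xc (INR j / INR M.+1)))).
apply: almost_surely_mono Hgood => w Hw eta heta.
have [delta [hdelta Hdelta]] := Xcont_tracks (HY w) hT hL hK HXc0 HR0 Hf_lip Hfbar_lip HXc_lip
  HXc_step Hbdd Hw eta heta.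
by exists delta; split => // eps [he _] hed; apply: Hdelta.
Qed.
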